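(* Let $\Omega=(0,1)$, let $\Lambda,\beta,\gamma,\mu$ be positive Hölder continuous functions on $[0,1]$, and fix $d_S>0$. Let $\tilde S$ be the unique positive solution of $-d_S\tilde S''=\Lambda-\tilde S$ on $(0,1)$, $\tilde S'(0)=\tilde S'(1)=0$, and assume that the set $\{x\in[0,1]:\beta(x)\tilde S(x)>\gamma(x)+\mu(x)\}$ is nonempty. Then for every sequence $d_{I,n}\to0$ and every sequence $(S_n,I_n)$ of positive solutions of (E) on $\Omega=(0,1)$ with $d_I=d_{I,n}$, there is a subsequence along which $S_n\to S_0$ uniformly on $[0,1]$ for some $S_0\in C([0,1])$ with $S_0>0$ on $[0,1]$, and $\int_0^1 I_n\,dx\to I_0$ for some constant $I_0>0$.
   Context: Problem (E) on $\Omega=(0,1)$ is the steady-state system $$-d_SS''=\Lambda(x)-S-\beta(x)SI+\gamma(x)I,\qquad -d_II''=\beta(x)SI-[\gamma(x)+\mu(x)]I\quad\text{in }(0,1),$$ with $S'(0)=S'(1)=I'(0)=I'(1)=0$; a positive solution means $S>0$, $I>0$ on $[0,1]$. *)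

From Stdlib Require Import Reals.
Open Scope R_scope.

Definition in01 (x : R) : Prop := 0 <= x <= 1.

Definition cont01_at (f : R -> R) (x0 : R) : Prop :=
  limit1_in f in01 (f x0) x0.

Definition cont01 (f : R -> R) : Prop := forall x, in01 x -> cont01_at f x.

Definition holder01 (f : R -> R) : Prop :=
  exists alpha C : R, 0 < alpha <= 1 /\ 0 <= C /\
    forall x y, in01 x -> in01 y -> x <> y ->
      Rabs (f x - f y) <= C * Rpower (Rabs (x - y)) alpha.

Definition pos01 (f : R -> R) : Prop := forall x, in01 x -> 0 < f x.

(* u is a classical C^2(0,1) /\ C^1([0,1]) function with first derivative u1
   and second derivative u2 on (0,1), satisfying homogeneous Neumann
   boundary conditions u'(0) = u'(1) = 0 (u1 extends continuously to [0,1]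
   with value 0 at the endpoints, which by the mean value theorem means the
   one-sided derivatives of u at 0 and 1 vanish). *)
Definition neumann_C2 (u u1 u2 : R -> R) : Prop :=
  cont01 u /\ cont01 u1 /\
  (forall x, 0 < x < 1 -> derivable_pt_lim u x (u1 x)) /\
  (forall x, 0 < x < 1 -> derivable_pt_lim u1 x (u2 x)) /\
  u1 0 = 0 /\ u1 1 = 0.

Definition is_Stilde (dS : R) (Lam St : R -> R) : Prop :=
  pos01 St /\
  exists S1 S2, neumann_C2 St S1 S2 /\
    forall x, 0 < x < 1 -> - dS * S2 x = Lam x - St x.

Definition pos_sol_E (dS dI : R) (Lam beta gamma mu S I : R -> R) : Prop :=
  pos01 S /\ pos01 I /\
  exists S1 S2 I1 I2,
    neumann_C2 S S1 S2 /\ neumann_C2 I I1 I2 /\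
    (forall x, 0 < x < 1 ->
       - dS * S2 x = Lam x - S x - beta x * S x * I x + gamma x * I x) /\
    (forall x, 0 < x < 1 ->
       - dI * I2 x = beta x * S x * I x - (gamma x + mu x) * I x).

(* The maximum principle traps every [S_n] between two positive constants;
   integrating the sum of the equations bounds [int I_n], and integrating the
   [S]-equation once bounds [S_n'], uniformly in [n].  An Arzela-Ascoli
   extraction then gives [S_n -> S_0] uniformly and [int I_n -> I_0].
   Positivity of [I_0] comes from a comparison with [St]: [St - S_n] is at most
   a constant times [int I_n], so if the mass vanished, [beta S_n - gamma - mu]
   would eventually be bounded below by some [dl > 0] on a fixed interval
   [[p, q]], where then [dI I_n'' <= - dl I_n]; by Sturm comparison with a sine
   arch this is impossible for a positive [I_n] once [dI] is small. *)

From Stdlib Require Import Reals Lra Lia Classical ClassicalEpsilon ZArith List.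
From Coquelicot Require Import Coquelicot.
Open Scope R_scope.
Set Bullet Behavior "Strict Subproofs".

Definition clamp01 (x : R) : R := Rmin 1 (Rmax 0 x).

(* Extending a function from [0,1] by constants turns relative continuity
   on [0,1] into ordinary continuity on R. *)
Definition ext01 (f : R -> R) (x : R) : R := f (clamp01 x).

Lemma clamp01_in01 x : in01 (clamp01 x).
Proof. unfold clamp01, in01, Rmin, Rmax. repeat destruct Rle_dec; lra. Qed.

Lemma clamp01_id x : in01 x -> clamp01 x = x.
Proof. unfold clamp01, in01, Rmin, Rmax. intros. repeat destruct Rle_dec; lra. Qed.

Lemma clamp01_contract x y : Rabs (clamp01 x - clamp01 y) <= Rabs (x - y).
Proof.
  unfold clamp01, Rmin, Rmax. repeat destruct Rle_dec;
  unfold Rabs; repeat destruct Rcase_abs; lra.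
Qed.

Lemma ext01_id f x : in01 x -> ext01 f x = f x.
Proof. intros; unfold ext01; rewrite clamp01_id; auto. Qed.

Lemma cont01_eps f : cont01 f ->
  forall x, in01 x -> forall eps, 0 < eps -> exists d, 0 < d /\
   forall y, in01 y -> Rabs (y - x) < d -> Rabs (f y - f x) < eps.
Proof.
  intros H x Hx eps He. destruct (H x Hx eps He) as [d [Hd Hd']].
  exists d; split; auto. intros y Hy Hyx. apply (Hd' y). split; auto.
Qed.

Lemma cont01_of_eps f : (forall x, in01 x -> forall eps, 0 < eps -> exists d, 0 < d /\
   forall y, in01 y -> Rabs (y - x) < d -> Rabs (f y - f x) < eps) -> cont01 f.
Proof.
  intros H x Hx eps He. destruct (H x Hx eps He) as [d [Hd Hd']].
  exists d; split; auto. intros y [Hy Hyx]. apply (Hd' y); auto.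
Qed.

Lemma continuity_pt_ext01 f : cont01 f -> forall x, continuity_pt (ext01 f) x.
Proof.
  intros H x eps He.
  destruct (cont01_eps f H (clamp01 x) (clamp01_in01 x) eps He) as [d [Hd Hd']].
  exists d; split; auto. intros y [_ Hy].
  simpl in *. unfold R_dist in *. unfold ext01. apply Hd'. apply clamp01_in01.
  eapply Rle_lt_trans. apply clamp01_contract. auto.
Qed.

Lemma derivable_pt_lim_ext01 f x l : 0 < x < 1 -> derivable_pt_lim f x l ->
  derivable_pt_lim (ext01 f) x l.
Proof.
  intros Hx H eps He. destruct (H eps He) as [d Hd].
  assert (Hp : 0 < Rmin d (Rmin x (1 - x))).
  { destruct d as [d dp]. simpl. repeat apply Rmin_pos; lra. }
  exists (mkposreal _ Hp). intros h Hh Hhd. simpl in Hhd.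
  pose proof (Rmin_l d (Rmin x (1 - x))). pose proof (Rmin_r d (Rmin x (1 - x))).
  pose proof (Rmin_l x (1 - x)). pose proof (Rmin_r x (1 - x)).
  unfold ext01. rewrite (clamp01_id x), (clamp01_id (x + h)).
  - apply Hd; auto. lra.
  - unfold in01. unfold Rabs in Hhd. destruct Rcase_abs; lra.
  - unfold in01; lra.
Qed.

Lemma cont01_minus f g : cont01 f -> cont01 g -> cont01 (fun x => f x - g x).
Proof.
  intros Hf Hg. apply cont01_of_eps. intros x Hx eps He.
  destruct (cont01_eps f Hf x Hx (eps/2)) as [d1 [H1 H1']]; [lra|].
  destruct (cont01_eps g Hg x Hx (eps/2)) as [d2 [H2 H2']]; [lra|].
  exists (Rmin d1 d2). split. apply Rmin_pos; auto.
  intros y Hy Hyx. assert (A := H1' y Hy (Rlt_le_trans _ _ _ Hyx (Rmin_l _ _))).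
  assert (B := H2' y Hy (Rlt_le_trans _ _ _ Hyx (Rmin_r _ _))).
  unfold Rabs in *. repeat destruct Rcase_abs; lra.
Qed.

Lemma cont01_opp f : cont01 f -> cont01 (fun x => - f x).
Proof.
  intros H. apply cont01_of_eps. intros x Hx eps He.
  destruct (cont01_eps f H x Hx eps He) as [d [Hd Hd']]. exists d; split; auto.
  intros y Hy Hyx. specialize (Hd' y Hy Hyx).
  replace (- f y - - f x) with (- (f y - f x)) by ring. rewrite Rabs_Ropp; auto.
Qed.

Lemma MVT_interior g dg a b : a < b ->
  (forall c, a <= c <= b -> continuity_pt g c) ->
  (forall c, a < c < b -> derivable_pt_lim g c (dg c)) ->
  exists c, a < c < b /\ g b - g a = dg c * (b - a).
Proof.
  intros Hab Hc Hd.
  assert (pr1 : forall c, a < c < b -> derivable_pt g c).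
  { intros c Hc'. exists (dg c). apply Hd; auto. }
  assert (pr2 : forall c, a < c < b -> derivable_pt id c).
  { intros c _. apply derivable_pt_id. }
  destruct (MVT g id a b pr1 pr2 Hab Hc) as [c [P HP]].
  { intros; apply derivable_continuous_pt, derivable_pt_id. }
  exists c; split; auto.
  rewrite (derive_pt_eq_0 g c (dg c) (pr1 c P) (Hd c P)) in HP.
  rewrite (derive_pt_eq_0 id c 1 (pr2 c P) (derivable_pt_lim_id c)) in HP.
  unfold id in HP. lra.
Qed.

Section Monotonicity.
Variables (g dg : R -> R) (a b : R).
Hypothesis g_cont : forall c, a <= c <= b -> continuity_pt g c.
Hypothesis g_deriv : forall c, a < c < b -> derivable_pt_lim g c (dg c).

Lemma le_of_deriv_nonneg : a <= b -> (forall c, a < c < b -> 0 <= dg c) -> g a <= g b.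
Proof.
  intros Hab Hp. destruct (Req_dec a b) as [->|Hne]; [lra|].
  destruct (MVT_interior g dg a b) as [c [Hc E]]; auto; try lra.
  specialize (Hp c Hc). nra.
Qed.

Lemma lt_of_deriv_neg : a < b -> (forall c, a < c < b -> dg c < 0) -> g b < g a.
Proof.
  intros Hab Hn. destruct (MVT_interior g dg a b) as [c [Hc E]]; auto.
  specialize (Hn c Hc). nra.
Qed.

Lemma lt_of_deriv_pos : a < b -> (forall c, a < c < b -> 0 < dg c) -> g a < g b.
Proof.
  intros Hab Hp. destruct (MVT_interior g dg a b) as [c [Hc E]]; auto.
  specialize (Hp c Hc). nra.
Qed.

End Monotonicity.

Lemma increment_ge_of_deriv_ge g dg a b m :
  (forall c, a <= c <= b -> continuity_pt g c) ->
  (forall c, a < c < b -> derivable_pt_lim g c (dg c)) ->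
  a <= b -> (forall c, a < c < b -> m <= dg c) -> m * (b - a) <= g b - g a.
Proof.
  intros Hcont Hder Hab Hm.
  enough (g a - m * a <= g b - m * b) by lra.
  apply (le_of_deriv_nonneg (fun t => g t - m * t) (fun t => dg t - m) a b); auto.
  - intros c Hc. apply continuity_pt_minus; auto.
    apply continuity_pt_scal, continuity_pt_id.
  - intros c Hc. replace (dg c - m) with (dg c - m * 1) by ring.
    apply derivable_pt_lim_minus; auto.
    apply derivable_pt_lim_scal, derivable_pt_lim_id.
  - intros c Hc. specialize (Hm c Hc). lra.
Qed.

Section Concavity.
Variables (g g1 g2 : R -> R) (a b : R).
Hypothesis ab : a < b.
Hypothesis g_cont : forall c, a <= c <= b -> continuity_pt g c.
Hypothesis g1_cont : forall c, a <= c <= b -> continuity_pt g1 c.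
Hypothesis g_deriv : forall c, a < c < b -> derivable_pt_lim g c (g1 c).
Hypothesis g1_deriv : forall c, a < c < b -> derivable_pt_lim g1 c (g2 c).
Hypothesis g2_neg : forall c, a < c < b -> g2 c < 0.

Lemma concave_descent_right : g1 a <= 0 -> g b < g a.
Proof.
  intros Ha. apply (lt_of_deriv_neg g g1 a b); auto.
  intros t Ht. enough (g1 t < g1 a) by lra.
  apply (lt_of_deriv_neg g1 g2 a t); try lra; intros;
    [apply g1_cont|apply g1_deriv|apply g2_neg]; lra.
Qed.

Lemma concave_descent_left : 0 <= g1 b -> g a < g b.
Proof.
  intros Hb. apply (lt_of_deriv_pos g g1 a b); auto.
  intros t Ht. enough (g1 b < g1 t) by lra.
  apply (lt_of_deriv_neg g1 g2 t b); try lra; intros;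
    [apply g1_cont|apply g1_deriv|apply g2_neg]; lra.
Qed.

End Concavity.

(* At a minimum of [u] below [K] the function would be strictly concave,
   which the Neumann condition forbids even at the endpoints. *)
Lemma neumann_min_principle u u1 u2 K : neumann_C2 u u1 u2 ->
  (forall x, 0 < x < 1 -> u x < K -> u2 x < 0) -> forall x, in01 x -> K <= u x.
Proof.
  intros [Hc [Hc1 [Hd [Hd1 [H0 H1]]]]] HK x Hx.
  destruct (continuity_ab_min (ext01 u) 0 1) as [xm [Hmin Hxm]]; [lra| |].
  { intros; apply continuity_pt_ext01; auto. }
  assert (Hmin' : forall y, in01 y -> u xm <= u y).
  { intros y Hy. specialize (Hmin y Hy). rewrite !ext01_id in Hmin; auto. }
  apply Rnot_lt_le; intro Hlt. assert (Hux := Hmin' x Hx).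
  destruct (cont01_eps u Hc xm Hxm (K - u xm)) as [d [Hdp Hdd]]; [lra|].
  assert (Hconc : forall y, 0 < y < 1 -> Rabs (y - xm) < d -> u2 y < 0).
  { intros y Hy Hyd. apply HK; auto. specialize (Hdd y ltac:(unfold in01; lra) Hyd).
    unfold Rabs in Hdd. destruct Rcase_abs; lra. }
  unfold in01 in *.
  assert (Hcu := continuity_pt_ext01 u Hc). assert (Hcu1 := continuity_pt_ext01 u1 Hc1).
  destruct (classic (u1 xm <= 0 /\ xm < 1)) as [[Hs Hr]|Hs].
  - set (y := xm + Rmin d (1 - xm) / 2).
    assert (Hmd := Rmin_l d (1 - xm)). assert (Hmd' := Rmin_r d (1 - xm)).
    assert (Hmp : 0 < Rmin d (1 - xm)) by (apply Rmin_pos; lra).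
    assert (Hy : xm < y <= 1 /\ y - xm < d) by (unfold y; lra).
    enough (ext01 u y < ext01 u xm) by (rewrite !ext01_id in H by (unfold in01; lra);
      specialize (Hmin' y ltac:(lra)); lra).
    apply (concave_descent_right (ext01 u) (ext01 u1) u2); auto; try lra.
    + intros c Hc'. rewrite ext01_id by (unfold in01; lra).
      apply derivable_pt_lim_ext01, Hd; lra.
    + intros c Hc'. apply derivable_pt_lim_ext01, Hd1; lra.
    + intros c Hc'. apply Hconc; [lra|]. unfold Rabs; destruct Rcase_abs; lra.
    + rewrite ext01_id by (unfold in01; lra). auto.
  - assert (Hl : 0 < xm /\ 0 <= u1 xm).
    { destruct (Req_dec xm 1) as [->|Hne].
      - rewrite H1. lra.
      - destruct (Req_dec xm 0) as [->|Hne0]; [rewrite H0 in Hs; lra|].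
        split; [lra|]. apply Rnot_lt_le. intro. apply Hs; lra. }
    set (y := xm - Rmin d xm / 2).
    assert (Hmd := Rmin_l d xm). assert (Hmd' := Rmin_r d xm).
    assert (Hmp : 0 < Rmin d xm) by (apply Rmin_pos; lra).
    assert (Hy : 0 <= y < xm /\ xm - y < d) by (unfold y; lra).
    enough (ext01 u y < ext01 u xm) by (rewrite !ext01_id in H by (unfold in01; lra);
      specialize (Hmin' y ltac:(lra)); lra).
    apply (concave_descent_left (ext01 u) (ext01 u1) u2); auto; try lra.
    + intros c Hc'. rewrite ext01_id by (unfold in01; lra).
      apply derivable_pt_lim_ext01, Hd; lra.
    + intros c Hc'. apply derivable_pt_lim_ext01, Hd1; lra.
    + intros c Hc'. apply Hconc; [lra|]. unfold Rabs; destruct Rcase_abs; lra.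
    + rewrite ext01_id by (unfold in01; lra). lra.
Qed.

Lemma neumann_C2_opp u u1 u2 : neumann_C2 u u1 u2 ->
  neumann_C2 (fun x => - u x) (fun x => - u1 x) (fun x => - u2 x).
Proof.
  intros [H1 [H2 [H3 [H4 [H5 H6]]]]]. repeat split.
  - apply cont01_opp; auto.
  - apply cont01_opp; auto.
  - intros x Hx. apply derivable_pt_lim_opp. auto.
  - intros x Hx. apply derivable_pt_lim_opp. auto.
  - rewrite H5; ring.
  - rewrite H6; ring.
Qed.

Lemma neumann_max_principle u u1 u2 K : neumann_C2 u u1 u2 ->
  (forall x, 0 < x < 1 -> K < u x -> 0 < u2 x) -> forall x, in01 x -> u x <= K.
Proof.
  intros Hn HK x Hx.
  enough (- K <= - u x) by lra.
  apply (neumann_min_principle _ _ _ (- K) (neumann_C2_opp _ _ _ Hn)); auto.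
  intros y Hy Hy'. specialize (HK y Hy ltac:(lra)). lra.
Qed.

Lemma holder01_cont01 f : holder01 f -> cont01 f.
Proof.
  intros [al [C [Hal [HC H]]]]. apply cont01_of_eps. intros x Hx eps He.
  set (e := eps / (C + 1)).
  assert (He' : 0 < e) by (unfold e; apply Rdiv_lt_0_compat; lra).
  exists (Rpower e (1 / al)). split. { unfold Rpower. apply exp_pos. }
  intros y Hy Hyx. destruct (Req_dec y x) as [->|Hne].
  { rewrite Rminus_diag, Rabs_R0; lra. }
  specialize (H y x Hy Hx Hne).
  assert (Ht : 0 < Rabs (y - x)) by (apply Rabs_pos_lt; lra).
  assert (Hp : Rpower (Rabs (y - x)) al < e).
  { replace e with (Rpower (Rpower e (1/al)) al).
    2:{ rewrite Rpower_mult. replace (1 / al * al) with 1 by (field; lra).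
        apply Rpower_1; auto. }
    unfold Rpower at 1 2. apply exp_increasing. apply Rmult_lt_compat_l. lra.
    apply ln_increasing; auto. }
  assert (C * Rpower (Rabs (y - x)) al <= C * e) by (apply Rmult_le_compat_l; lra).
  assert (C * e < eps).
  { unfold e. apply (Rmult_lt_reg_r (C+1)). lra.
    field_simplify; try lra. }
  lra.
Qed.

Lemma cont01_bounded f : cont01 f -> exists M, forall x, in01 x -> f x <= M.
Proof.
  intros H. destruct (continuity_ab_maj (ext01 f) 0 1) as [xm [Hm Hxm]]; [lra| |].
  { intros; apply continuity_pt_ext01; auto. }
  exists (ext01 f xm). intros x Hx. specialize (Hm x Hx). rewrite ext01_id in Hm; auto.
Qed.

Lemma cont01_pos_lower_bound f : cont01 f -> pos01 f ->
  exists m, 0 < m /\ forall x, in01 x -> m <= f x.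
Proof.
  intros H Hp. destruct (continuity_ab_min (ext01 f) 0 1) as [xm [Hm Hxm]]; [lra| |].
  { intros; apply continuity_pt_ext01; auto. }
  exists (f xm). split; [apply Hp, Hxm|].
  intros x Hx. specialize (Hm x Hx). rewrite !ext01_id in Hm; auto.
Qed.

Definition prim (f : R -> R) (x : R) : R := RInt (ext01 f) 0 x.

Lemma derivable_pt_lim_prim f : cont01 f ->
  forall x, derivable_pt_lim (prim f) x (ext01 f x).
Proof.
  intros H x. apply is_derive_Reals. unfold prim.
  apply (is_derive_RInt (ext01 f) (fun b => RInt (ext01 f) 0 b) 0 x).
  - apply filter_forall. intros b. apply (@RInt_correct R_CompleteNormedModule).
    apply ex_RInt_continuous. intros z _. apply continuity_pt_filterlim.
    apply continuity_pt_ext01; auto.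
  - apply continuity_pt_filterlim. apply continuity_pt_ext01; auto.
Qed.

Lemma continuity_pt_prim f : cont01 f -> forall x, continuity_pt (prim f) x.
Proof.
  intros H x. apply derivable_continuous_pt. exists (ext01 f x).
  apply derivable_pt_lim_prim; auto.
Qed.

Lemma prim_0 f : prim f 0 = 0.
Proof. unfold prim. rewrite RInt_point. reflexivity. Qed.

Lemma prim_le f : cont01 f -> pos01 f ->
  forall x y, 0 <= x <= y -> y <= 1 -> prim f x <= prim f y.
Proof.
  intros H Hp x y Hxy Hy. apply (le_of_deriv_nonneg (prim f) (ext01 f)); try lra.
  - intros; apply continuity_pt_prim; auto.
  - intros; apply derivable_pt_lim_prim; auto.
  - intros c Hc. rewrite ext01_id by (unfold in01; lra).
    left; apply Hp; unfold in01; lra.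
Qed.

Lemma prim_bounds f : cont01 f -> pos01 f ->
  forall x, in01 x -> 0 <= prim f x <= prim f 1.
Proof.
  intros H Hp x Hx. unfold in01 in Hx. rewrite <- (prim_0 f).
  split; apply prim_le; auto; lra.
Qed.

Lemma Riemann_integrable_cont01 f : cont01 f -> Riemann_integrable f 0 1.
Proof.
  intros H. apply (Riemann_integrable_ext (ext01 f)).
  - intros x Hx. rewrite Rmin_left in Hx by lra. rewrite Rmax_right in Hx by lra.
    apply ext01_id. exact Hx.
  - apply continuity_implies_RiemannInt. lra. intros; apply continuity_pt_ext01; auto.
Qed.

Lemma RiemannInt_prim f (pr : Riemann_integrable f 0 1) : cont01 f ->
  RiemannInt pr = prim f 1.
Proof.
  intros H. rewrite <- RInt_Reals. unfold prim. apply RInt_ext.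
  intros x Hx. rewrite Rmin_left in Hx by lra. rewrite Rmax_right in Hx by lra.
  symmetry; apply ext01_id. unfold in01; lra.
Qed.

Lemma derivable_pt_lim_value f x l l' : derivable_pt_lim f x l -> l = l' ->
  derivable_pt_lim f x l'.
Proof. intros H <-; exact H. Qed.

Ltac continuity_pt_tac := repeat match goal with
  | |- continuity_pt (fun y => @?A y + @?B y) _ => apply (continuity_pt_plus A B)
  | |- continuity_pt (fun y => @?A y - @?B y) _ => apply (continuity_pt_minus A B)
  | |- continuity_pt (fun y => @?A y * @?B y) _ => apply (continuity_pt_mult A B)
  | |- continuity_pt (fun y => y) _ => apply continuity_pt_id
  | |- continuity_pt (fun _ => ?c) _ => apply continuity_pt_const; intros ? ?; reflexivity
  end.

Ltac derivable_pt_lim_tac := repeat match goal with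
  | |- derivable_pt_lim (fun y => @?A y + @?B y) _ _ => apply (derivable_pt_lim_plus A B)
  | |- derivable_pt_lim (fun y => @?A y - @?B y) _ _ => apply (derivable_pt_lim_minus A B)
  | |- derivable_pt_lim (fun y => @?A y * @?B y) _ _ => apply (derivable_pt_lim_mult A B)
  | |- derivable_pt_lim (fun y => y) _ _ => apply derivable_pt_lim_id
  | |- derivable_pt_lim (fun _ => ?c) _ _ => apply derivable_pt_lim_const
  end.

Ltac leaf_tac := first
  [ apply continuity_pt_ext01; assumption
  | apply continuity_pt_prim; assumption
  | apply derivable_pt_lim_prim; assumption
  | apply derivable_pt_lim_ext01; [assumption| match goal with
      H : forall x, 0 < x < 1 -> derivable_pt_lim ?f x _ |- derivable_pt_lim ?f _ _ =>
        apply H; assumption end] ].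

Lemma Lipschitz_of_deriv_bound f f1 L : cont01 f ->
  (forall x, 0 < x < 1 -> derivable_pt_lim f x (f1 x)) ->
  (forall x, in01 x -> Rabs (f1 x) <= L) ->
  forall x y, in01 x -> in01 y -> Rabs (f x - f y) <= L * Rabs (x - y).
Proof.
  intros Hc Hd Hb.
  assert (Hlt : forall x y, in01 x -> in01 y -> x < y -> Rabs (f x - f y) <= L * Rabs (x - y)).
  { intros x y Hx Hy Hxy. destruct (MVT_interior (ext01 f) f1 x y) as [c [Hc' E]]; auto.
    - intros; apply continuity_pt_ext01; auto.
    - intros c Hc'. apply derivable_pt_lim_ext01, Hd; unfold in01 in *; lra.
    - rewrite !ext01_id in E by auto.
      replace (f x - f y) with (- (f1 c * (y - x))) by lra. rewrite Rabs_Ropp, Rabs_mult.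
      rewrite (Rabs_minus_sym x y). apply Rmult_le_compat_r; [apply Rabs_pos|].
      apply Hb. unfold in01 in *; lra. }
  intros x y Hx Hy. destruct (Rtotal_order x y) as [H|[<-|H]].
  - auto.
  - rewrite !Rminus_diag, Rabs_R0. lra.
  - rewrite Rabs_minus_sym, (Rabs_minus_sym x). auto.
Qed.

Section APrioriBounds.
Variables (Lam beta gamma mu : R -> R) (dS dI : R) (S I : R -> R).
Variables (Lm LM bm bM gm gM mm : R).
Hypothesis dS_pos : 0 < dS.
Hypothesis sol : pos_sol_E dS dI Lam beta gamma mu S I.
Hypothesis Lam_bnd : forall x, in01 x -> Lm <= Lam x <= LM.
Hypothesis beta_bnd : forall x, in01 x -> bm <= beta x <= bM.
Hypothesis gamma_bnd : forall x, in01 x -> gm <= gamma x <= gM.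
Hypothesis mu_bnd : forall x, in01 x -> mm <= mu x.
Hypotheses (Lm_pos : 0 < Lm) (bm_pos : 0 < bm) (gm_pos : 0 < gm) (mm_pos : 0 < mm).

Lemma S_ge : forall x, in01 x -> Rmin Lm (gm / bM) <= S x.
Proof.
  destruct sol as [HS [HI [S1 [S2 [I1 [I2 [HnS [HnI [ES EI]]]]]]]]].
  apply (neumann_min_principle S S1 S2); auto.
  intros x Hx Hlt. assert (Hx' : in01 x) by (unfold in01; lra).
  specialize (ES x Hx). specialize (Lam_bnd x Hx'). specialize (beta_bnd x Hx').
  specialize (gamma_bnd x Hx'). specialize (HS x Hx'). specialize (HI x Hx').
  assert (S x < Lm) by (eapply Rlt_le_trans; [apply Hlt|apply Rmin_l]).
  assert (S x < gm / bM) by (eapply Rlt_le_trans; [apply Hlt|apply Rmin_r]).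
  assert (bM * S x < gm).
  { apply (Rmult_lt_compat_l bM) in H0; [|lra]. field_simplify in H0; lra. }
  assert (beta x * S x <= bM * S x) by (apply Rmult_le_compat_r; lra).
  assert (0 < (gamma x - beta x * S x) * I x) by (apply Rmult_lt_0_compat; lra).
  nra.
Qed.

Lemma S_le : forall x, in01 x -> S x <= Rmax LM (gM / bm).
Proof.
  destruct sol as [HS [HI [S1 [S2 [I1 [I2 [HnS [HnI [ES EI]]]]]]]]].
  apply (neumann_max_principle S S1 S2); auto.
  intros x Hx Hlt. assert (Hx' : in01 x) by (unfold in01; lra).
  specialize (ES x Hx). specialize (Lam_bnd x Hx'). specialize (beta_bnd x Hx').
  specialize (gamma_bnd x Hx'). specialize (HS x Hx'). specialize (HI x Hx').
  assert (S x > LM) by (eapply Rle_lt_trans; [apply Rmax_l|apply Hlt]).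
  assert (S x > gM / bm) by (eapply Rle_lt_trans; [apply Rmax_r|apply Hlt]).
  assert (bm * S x > gM).
  { apply (Rmult_lt_compat_l bm) in H0; [|lra]. field_simplify in H0; lra. }
  assert (beta x * S x >= bm * S x) by (apply Rle_ge, Rmult_le_compat_r; lra).
  assert (0 < (beta x * S x - gamma x) * I x) by (apply Rmult_lt_0_compat; lra).
  nra.
Qed.

(* Integrating the sum of the two equations kills the diffusion terms
   (Neumann condition), leaving [mm * int I <= int (Lam - S - mu I) <= LM]. *)
Lemma prim_I_le : prim I 1 <= LM / mm.
Proof.
  destruct sol as [HS [HI [S1 [S2 [I1 [I2 [HnS [HnI [ES EI]]]]]]]]].
  destruct HnS as [cS [cS1 [dS0 [dS1 [S10 S11]]]]].
  destruct HnI as [cI [cI1 [dI0 [dI1 [I10 I11]]]]].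
  set (Q := fun x => dS * ext01 S1 x + dI * ext01 I1 x + LM * x - mm * prim I x).
  assert (Hq : Q 0 <= Q 1).
  { apply (le_of_deriv_nonneg Q (fun x => dS * S2 x + dI * I2 x + LM - mm * I x)).
    - intros c _. unfold Q. continuity_pt_tac. all: try leaf_tac.
    - intros c Hc. unfold Q. eapply derivable_pt_lim_value. derivable_pt_lim_tac.
      all: try leaf_tac.
      rewrite ?(ext01_id _ c) by (unfold in01; lra). ring.
    - lra.
    - intros c Hc. assert (Hx' : in01 c) by (unfold in01; lra).
      specialize (ES c Hc). specialize (EI c Hc). specialize (Lam_bnd c Hx').
      specialize (mu_bnd c Hx'). specialize (HS c Hx'). specialize (HI c Hx').
      assert (0 <= (mu c - mm) * I c) by (apply Rmult_le_pos; lra).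
      nra. }
  unfold Q in Hq. rewrite prim_0 in Hq.
  rewrite !ext01_id in Hq by (unfold in01; lra).
  rewrite S10, S11, I10, I11 in Hq.
  apply (Rmult_le_reg_r mm); [lra|]. field_simplify; lra.
Qed.

Lemma S_Lipschitz : forall x y, in01 x -> in01 y ->
  Rabs (S x - S y) <= (LM + gM * (LM / mm)) / dS * Rabs (x - y).
Proof.
  assert (HJ := prim_I_le).
  destruct sol as [HS [HI [S1 [S2 [I1 [I2 [HnS [HnI [ES EI]]]]]]]]].
  destruct HnS as [cS [cS1 [dS0 [dS1 [S10 S11]]]]].
  destruct HnI as [cI [cI1 [dI0 [dI1 [I10 I11]]]]].
  assert (HPb := prim_bounds I cI HI).
  set (Lip := (LM + gM * (LM / mm)) / dS).
  assert (HgM : 0 <= gM) by (destruct (gamma_bnd 0) as [A B]; [unfold in01; lra|lra]).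
  assert (HLM : 0 < LM) by (destruct (Lam_bnd 0) as [A B]; [unfold in01; lra|lra]).
  (* [dS S' + LM x + gM int_0^x I] is nondecreasing, and [S'] vanishes at both ends. *)
  set (Q := fun x => dS * ext01 S1 x + LM * x + gM * prim I x).
  assert (Hq : forall a b, 0 <= a <= b -> b <= 1 -> Q a <= Q b).
  { intros a b Hab Hb1.
    apply (le_of_deriv_nonneg Q (fun x => dS * S2 x + LM + gM * I x)).
    - intros c _. unfold Q. continuity_pt_tac. all: try leaf_tac.
    - intros c Hc0. assert (Hc : 0 < c < 1) by lra. unfold Q.
      eapply derivable_pt_lim_value. derivable_pt_lim_tac. all: try leaf_tac.
      rewrite ?(ext01_id _ c) by (unfold in01; lra). ring.
    - lra.
    - intros c Hc. assert (Hx' : in01 c) by (unfold in01; lra).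
      specialize (ES c ltac:(lra)). specialize (Lam_bnd c Hx').
      specialize (beta_bnd c Hx'). specialize (gamma_bnd c Hx').
      specialize (HS c Hx'). specialize (HI c Hx').
      assert (0 <= (gM - gamma c) * I c) by (apply Rmult_le_pos; lra).
      assert (0 <= beta c * S c * I c) by (repeat apply Rmult_le_pos; lra).
      nra. }
  assert (HS1 : forall x, in01 x -> Rabs (S1 x) <= Lip).
  { intros x Hx. unfold in01 in Hx.
    pose proof (Hq 0 x ltac:(lra) ltac:(lra)) as A. pose proof (Hq x 1 ltac:(lra) ltac:(lra)) as B.
    unfold Q in A, B. rewrite prim_0 in A.
    rewrite !ext01_id in A, B by (unfold in01 in *; lra).
    rewrite S10 in A. rewrite S11 in B. specialize (HPb x Hx).
    assert (gM * prim I x <= gM * (LM / mm)) by (apply Rmult_le_compat_l; lra).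
    assert (gM * prim I 1 <= gM * (LM / mm)) by (apply Rmult_le_compat_l; lra).
    assert (0 <= gM * prim I x) by (apply Rmult_le_pos; lra).
    unfold Lip. apply Rabs_le. unfold in01 in Hx. split.
    - apply (Rmult_le_reg_l dS); auto.
      replace (dS * - ((LM + gM * (LM / mm)) / dS)) with (-(LM + gM*(LM/mm))) by (field; lra).
      nra.
    - apply (Rmult_le_reg_l dS); auto.
      replace (dS * ((LM + gM * (LM / mm)) / dS)) with ((LM + gM*(LM/mm))) by (field; lra).
      nra. }
  apply (Lipschitz_of_deriv_bound S S1); auto.
Qed.

End APrioriBounds.

Lemma increment_le_of_deriv_le g dg a b m :
  (forall c, a <= c <= b -> continuity_pt g c) ->
  (forall c, a < c < b -> derivable_pt_lim g c (dg c)) ->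
  a <= b -> (forall c, a < c < b -> dg c <= m) -> g b - g a <= m * (b - a).
Proof.
  intros Hcont Hder Hab Hm.
  enough (- m * (b - a) <= - g b - - g a) by lra.
  apply (increment_ge_of_deriv_ge (fun t => - g t) (fun t => - dg t)); auto.
  - intros c Hc. apply continuity_pt_opp; auto.
  - intros c Hc. apply derivable_pt_lim_opp; auto.
  - intros c Hc. specialize (Hm c Hc). lra.
Qed.

Lemma continuity_pt_eps f x : continuity_pt f x -> forall eps, 0 < eps ->
  exists d, 0 < d /\ forall y, Rabs (y - x) < d -> Rabs (f y - f x) < eps.
Proof.
  intros H eps He. destruct (H eps He) as [d [Hd Hd']]. exists d; split; auto.
  intros y Hy. destruct (Req_dec x y) as [->|Hne].
  { rewrite Rminus_diag, Rabs_R0; lra. }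
  apply (Hd' y). split. split; [exact I|auto]. exact Hy.
Qed.

Lemma continuous_induction_right f a b dl : a <= b ->
  (forall x, a <= x <= b -> continuity_pt f x) -> 0 < dl -> dl <= f a ->
  (forall x, a <= x <= b -> (forall y, a <= y <= x -> 0 < f y) -> dl <= f x) ->
  forall x, a <= x <= b -> dl <= f x.
Proof.
  intros Hab Hc Hd Ha H.
  set (E := fun y => a <= y <= b /\ forall z, a <= z <= y -> 0 < f z).
  assert (HEa : E a). { split. lra. intros z Hz. replace z with a by lra. lra. }
  assert (HEb : bound E). { exists b. intros y [Hy _]. lra. }
  destruct (completeness E HEb (ex_intro _ a HEa)) as [s [Hub Hlub]].
  assert (Has : a <= s) by (apply Hub; auto).
  assert (Hsb : s <= b) by (apply Hlub; intros y [Hy _]; lra).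
  assert (C1 : forall z, a <= z < s -> dl <= f z).
  { intros z Hz.
    assert (Hex : exists y, E y /\ z < y).
    { apply NNPP. intro Hn. assert (s <= z).
      { apply Hlub. intros y Hy. apply Rnot_lt_le. intro Hl. apply Hn. exists y; auto. }
      lra. }
    destruct Hex as [y [[Hy1 Hy2] Hzy]]. apply H. lra. intros w Hw. apply Hy2. lra. }
  assert (C2 : dl <= f s).
  { destruct (Req_dec s a) as [->|Hne]; auto.
    apply Rnot_lt_le. intro Hlt.
    destruct (continuity_pt_eps f s (Hc s ltac:(lra)) (dl - f s)) as [d [Hd0 Hd1]]. lra.
    set (z := Rmax a (s - d/2)).
    assert (a <= z < s) by (unfold z; unfold Rmax; destruct Rle_dec; lra).
    assert (Rabs (z - s) < d)
      by (unfold z, Rmax; destruct Rle_dec; unfold Rabs; destruct Rcase_abs; lra).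
    specialize (Hd1 z H1). specialize (C1 z H0).
    unfold Rabs in Hd1; destruct Rcase_abs in Hd1; lra. }
  assert (C3 : s = b).
  { destruct (Req_dec s b); auto. exfalso.
    destruct (continuity_pt_eps f s (Hc s ltac:(lra)) (dl/2)) as [d [Hd0 Hd1]]. lra.
    set (y := Rmin b (s + d/2)).
    assert (s < y <= b) by (unfold y, Rmin; destruct Rle_dec; lra).
    assert (E y).
    { split. lra. intros z Hz. destruct (Rlt_le_dec z s).
      - specialize (C1 z ltac:(lra)). lra.
      - assert (Rabs (z - s) < d) by (unfold y, Rmin in Hz; destruct Rle_dec in Hz;
           unfold Rabs; destruct Rcase_abs; lra).
        specialize (Hd1 z H2). unfold Rabs in Hd1; destruct Rcase_abs in Hd1; lra. }
    specialize (Hub y H2). lra. }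
  intros x Hx. destruct (Rlt_le_dec x s). apply C1; lra. replace x with s by lra. auto.
Qed.

Lemma continuous_induction_left f a b dl : a <= b ->
  (forall x, a <= x <= b -> continuity_pt f x) -> 0 < dl -> dl <= f b ->
  (forall x, a <= x <= b -> (forall y, x <= y <= b -> 0 < f y) -> dl <= f x) ->
  forall x, a <= x <= b -> dl <= f x.
Proof.
  intros Hab Hc Hd Hb H x Hx.
  set (g := fun t => f (- t)).
  enough (dl <= g (- x)) by (unfold g in H0; rewrite Ropp_involutive in H0; auto).
  apply (continuous_induction_right g (- b) (- a)); try lra.
  - intros t Ht. unfold g.
    apply (continuity_pt_comp (fun t => - t) f). apply continuity_pt_opp, continuity_pt_id.
    apply Hc. lra.
  - unfold g. rewrite Ropp_involutive. auto.
  - intros t Ht Hy. unfold g. apply H. lra. intros y Hy'. specialize (Hy (- y) ltac:(lra)).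
    unfold g in Hy. rewrite Ropp_involutive in Hy. auto.
Qed.

Lemma neumann_deriv_at_max u u1 u2 a : neumann_C2 u u1 u2 -> in01 a ->
  (forall x, in01 x -> u x <= u a) -> u1 a = 0.
Proof.
  intros [_ [_ [Hd [_ [H0 H1]]]]] Ha Hmax.
  destruct (Req_dec a 0) as [->|Ha0]; auto. destruct (Req_dec a 1) as [->|Ha1]; auto.
  assert (Hai : 0 < a < 1) by (unfold in01 in Ha; lra).
  assert (pr : derivable_pt u a) by (exists (u1 a); exact (Hd a Hai)).
  rewrite <- (derive_pt_eq_0 u a (u1 a) pr (Hd a Hai)).
  apply (deriv_maximum u 0 1 a pr); try lra.
  intros x Hx0 Hx1; apply Hmax; unfold in01; lra.
Qed.

Section Plateau.
Variables (w w1 w2 I : R -> R) (kap : R).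
Hypothesis w_C2 : neumann_C2 w w1 w2.
Hypothesis I_cont : cont01 I.
Hypothesis I_pos : pos01 I.
Hypothesis kap_ge0 : 0 <= kap.
Hypothesis subsol : forall x, 0 < x < 1 -> 0 <= w x -> 0 <= w2 x + kap * I x.

Lemma neumann_slope_drop u v : 0 <= u <= v -> v <= 1 ->
  (forall y, u < y < v -> 0 < w y) -> w1 u - w1 v <= kap * prim I 1.
Proof.
  destruct w_C2 as [cw [cw1 [dw0 [dw1 _]]]].
  intros Huv Hv Hpos.
  assert (Hmono : ext01 w1 u + kap * prim I u <= ext01 w1 v + kap * prim I v).
  { apply (le_of_deriv_nonneg (fun t => ext01 w1 t + kap * prim I t)
             (fun t => w2 t + kap * I t)); try lra.
    - intros c _. continuity_pt_tac. all: try leaf_tac.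
    - intros c Hc0. assert (Hc : 0 < c < 1) by lra.
      eapply derivable_pt_lim_value. derivable_pt_lim_tac. all: try leaf_tac.
      rewrite ext01_id by (unfold in01; lra). ring.
    - intros c Hc. apply subsol; [lra|]. left; apply Hpos; lra. }
  rewrite !ext01_id in Hmono by (unfold in01; lra).
  assert (prim I v - prim I u <= prim I 1).
  { pose proof (prim_bounds I I_cont I_pos u ltac:(unfold in01; lra)).
    pose proof (prim_bounds I I_cont I_pos v ltac:(unfold in01; lra)). lra. }
  nra.
Qed.

Lemma neumann_plateau a : in01 a -> (forall x, in01 x -> w x <= w a) ->
  kap * prim I 1 < w a -> forall x, in01 x -> w a - kap * prim I 1 <= w x.
Proof.
  intros Ha Hmax Hbig.
  set (eta := kap * prim I 1) in *.
  assert (Heta : 0 <= eta).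
  { apply Rmult_le_pos; auto. apply (prim_bounds I I_cont I_pos 1). unfold in01; lra. }
  assert (Hw1a : w1 a = 0) by (apply (neumann_deriv_at_max w w1 w2); auto).
  destruct w_C2 as [cw [cw1 [dw0 [dw1 _]]]].
  unfold in01 in Ha.
  assert (Hright : forall x, a <= x <= 1 -> w a - eta <= ext01 w x).
  { apply continuous_induction_right; try lra.
    - intros; leaf_tac.
    - rewrite ext01_id by (unfold in01; lra). lra.
    - intros x Hx Hpos.
      assert (Hslope : forall t, a < t < x -> - eta <= w1 t).
      { intros t Ht. pose proof (neumann_slope_drop a t ltac:(lra) ltac:(lra)) as D.
        enough (w1 a - w1 t <= eta) by lra. apply D. intros y Hy.
        specialize (Hpos y ltac:(lra)). rewrite ext01_id in Hpos by (unfold in01; lra). auto. }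
      assert (Hinc : - eta * (x - a) <= ext01 w x - ext01 w a).
      { apply (increment_ge_of_deriv_ge _ w1); auto; try lra.
        - intros; leaf_tac.
        - intros c Hc. apply derivable_pt_lim_ext01, dw0; lra. }
      rewrite (ext01_id w a) in Hinc by (unfold in01; lra). nra. }
  assert (Hleft : forall x, 0 <= x <= a -> w a - eta <= ext01 w x).
  { apply continuous_induction_left; try lra.
    - intros; leaf_tac.
    - rewrite ext01_id by (unfold in01; lra). lra.
    - intros x Hx Hpos.
      assert (Hslope : forall t, x < t < a -> w1 t <= eta).
      { intros t Ht. pose proof (neumann_slope_drop t a ltac:(lra) ltac:(lra)) as D.
        enough (w1 t - w1 a <= eta) by lra. apply D. intros y Hy.
        specialize (Hpos y ltac:(lra)). rewrite ext01_id in Hpos by (unfold in01; lra). auto. }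
      assert (Hinc : ext01 w a - ext01 w x <= eta * (a - x)).
      { apply (increment_le_of_deriv_le _ w1); auto; try lra.
        - intros; leaf_tac.
        - intros c Hc. apply derivable_pt_lim_ext01, dw0; lra. }
      rewrite (ext01_id w a) in Hinc by (unfold in01; lra). nra. }
  intros x Hx. rewrite <- (ext01_id w x Hx). unfold in01 in Hx.
  destruct (Rle_lt_dec x a); [apply Hleft|apply Hright]; lra.
Qed.

End Plateau.

(* The plateau estimate keeps [w] within [K / D * int I] of its maximum [M] on
   all of [0,1]; integrating [D w'' >= w - K I] against the Neumann condition
   then gives [M - K / D * int I <= K * int I]. *)
Lemma neumann_subsol_le w w1 w2 I D K : neumann_C2 w w1 w2 -> cont01 I -> pos01 I ->
  0 < D -> 0 <= K -> (forall x, 0 < x < 1 -> w x - K * I x <= D * w2 x) ->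
  forall x, in01 x -> w x <= (2 + D) * K / D * prim I 1.
Proof.
  intros Hw cI HI HD HK Hsub.
  set (J := prim I 1).
  assert (HJ : 0 <= J) by (apply (prim_bounds I cI HI 1); unfold in01; lra).
  set (eta := K / D * J).
  assert (Heta : 0 <= eta).
  { apply Rmult_le_pos; [|lra]. apply Rmult_le_pos; [lra|]. left; apply Rinv_0_lt_compat; lra. }
  replace ((2 + D) * K / D * J) with ((2 + D) * eta) by (unfold eta; field; lra).
  destruct (continuity_ab_maj (ext01 w) 0 1) as [a [Hmax Ha]];
    [lra| intros; apply continuity_pt_ext01, Hw |].
  assert (HM : forall x, in01 x -> w x <= w a).
  { intros x Hx. specialize (Hmax x Hx). rewrite !ext01_id in Hmax; auto. }
  destruct (Rle_lt_dec (w a) (2 * eta)) as [Hsmall|Hbig].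
  { intros x Hx. specialize (HM x Hx). nra. }
  assert (Hplateau : forall x, in01 x -> w a - eta <= w x).
  { apply (neumann_plateau w w1 w2 I (K / D)); auto.
    - apply Rmult_le_pos; [lra|]. left; apply Rinv_0_lt_compat; lra.
    - intros x Hx Hwx. specialize (Hsub x Hx).
      replace (w2 x + K / D * I x) with ((D * w2 x + K * I x) / D) by (field; lra).
      apply Rmult_le_pos; [lra|]. left; apply Rinv_0_lt_compat; lra.
    - fold J eta. lra. }
  destruct Hw as [_ [cw1 [_ [dw1 [w10 w11]]]]].
  set (Q := fun t => D * ext01 w1 t - (w a - eta) * t + K * prim I t).
  assert (HQ : Q 0 <= Q 1).
  { apply (le_of_deriv_nonneg Q (fun t => D * w2 t - (w a - eta) * 1 + K * I t)).
    - intros c _. unfold Q. continuity_pt_tac. all: try leaf_tac.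
    - intros c Hc. unfold Q. eapply derivable_pt_lim_value. derivable_pt_lim_tac.
      all: try leaf_tac.
      rewrite ?(ext01_id _ c) by (unfold in01; lra). ring.
    - lra.
    - intros c Hc. assert (Hc' : in01 c) by (unfold in01; lra).
      specialize (Hsub c Hc). specialize (Hplateau c Hc'). lra. }
  unfold Q in HQ. rewrite prim_0 in HQ. rewrite !ext01_id in HQ by (unfold in01; lra).
  rewrite w10, w11 in HQ. fold J in HQ.
  assert (K * J = eta * D) by (unfold eta; field; lra).
  intros x Hx. specialize (HM x Hx). nra.
Qed.

(* Sturm comparison with [sin (om (t - p))], which vanishes at both ends of
   [p, q]: a positive [I] with [dI I'' <= - dl I] cannot exist on an interval
   longer than [PI * sqrt (dI / dl)]. *)
Lemma sturm_no_positive_solution (I I1 I2 : R -> R) p q dI dl :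
  p < q -> 0 < dI -> 0 < dl -> (PI / (q - p)) ^ 2 * dI <= dl ->
  (forall x, p <= x <= q -> continuity_pt I x) ->
  (forall x, p <= x <= q -> continuity_pt I1 x) ->
  (forall x, p < x < q -> derivable_pt_lim I x (I1 x)) ->
  (forall x, p < x < q -> derivable_pt_lim I1 x (I2 x)) ->
  (forall x, p <= x <= q -> 0 < I x) ->
  (forall x, p < x < q -> dI * I2 x <= - dl * I x) -> False.
Proof.
  intros Hpq HdI Hdl Hom cI cI1 dI0 dI1 Ipos EI.
  set (om := PI / (q - p)) in Hom.
  assert (Hom0 : 0 < om) by (unfold om; apply Rdiv_lt_0_compat; [apply PI_RGT_0|lra]).
  assert (dsin : forall t, derivable_pt_lim (fun t => sin (om * (t - p))) t
                             (om * cos (om * (t - p)))).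
  { intros t. apply is_derive_Reals. auto_derive; auto. ring_simplify. reflexivity. }
  assert (dcos : forall t, derivable_pt_lim (fun t => cos (om * (t - p))) t
                             (- om * sin (om * (t - p)))).
  { intros t. apply is_derive_Reals. auto_derive; auto. ring_simplify. reflexivity. }
  set (V := fun t => om * I t * cos (om * (t - p)) - I1 t * sin (om * (t - p))).
  assert (HV : V p <= V q).
  { apply (le_of_deriv_nonneg V (fun t => - (I2 t + om ^ 2 * I t) * sin (om * (t - p))));
      [| |lra|].
    - intros c Hc. unfold V. continuity_pt_tac; try ((apply cI || apply cI1); lra).
      all: apply derivable_continuous_pt; eexists; (apply dcos || apply dsin).
    - intros c Hc. unfold V. eapply derivable_pt_lim_value. derivable_pt_lim_tac.
      all: try ((apply dI0 || apply dI1); lra).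
      1, 2: (apply dcos || apply dsin).
      ring.
    - intros c Hc.
      assert (Hs : 0 < sin (om * (c - p))).
      { apply sin_gt_0. apply Rmult_lt_0_compat; lra.
        unfold om. replace (PI / (q - p) * (c - p)) with (PI * ((c - p) / (q - p))) by (field; lra).
        assert ((c - p) / (q - p) < 1)
          by (apply (Rmult_lt_reg_r (q - p)); [lra|]; field_simplify; lra).
        pose proof PI_RGT_0. nra. }
      specialize (EI c Hc). assert (HIc : 0 < I c) by (apply Ipos; lra).
      assert (om ^ 2 * dI * I c <= dl * I c) by (apply Rmult_le_compat_r; lra).
      assert (I2 c + om ^ 2 * I c <= 0) by (apply (Rmult_le_reg_l dI); [lra|nra]).
      nra. }
  unfold V in HV. rewrite Rminus_diag, Rmult_0_r, sin_0, cos_0 in HV.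
  replace (om * (q - p)) with PI in HV by (unfold om; field; lra).
  rewrite sin_PI, cos_PI in HV.
  assert (0 < I p) by (apply Ipos; lra). assert (0 < I q) by (apply Ipos; lra).
  nra.
Qed.

Section StildeComparison.
Variables (Lam beta gamma mu : R -> R) (dS dI : R) (S I St : R -> R).
Variables (Lm LM bm bM gm gM : R).
Hypothesis dS_pos : 0 < dS.
Hypothesis sol : pos_sol_E dS dI Lam beta gamma mu S I.
Hypothesis St_sol : is_Stilde dS Lam St.
Hypothesis Lam_bnd : forall x, in01 x -> Lm <= Lam x <= LM.
Hypothesis beta_bnd : forall x, in01 x -> bm <= beta x <= bM.
Hypothesis gamma_bnd : forall x, in01 x -> gm <= gamma x <= gM.
Hypotheses (Lm_pos : 0 < Lm) (bm_pos : 0 < bm) (gm_pos : 0 < gm).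

Lemma Stilde_minus_S_le : forall x, in01 x ->
  St x - S x <= (2 + dS) * (bM * Rmax LM (gM / bm)) / dS * prim I 1.
Proof.
  assert (HSup : forall x, in01 x -> S x <= Rmax LM (gM / bm)).
  { exact (S_le Lam beta gamma mu dS dI S I Lm LM bm bM gm gM
      dS_pos sol Lam_bnd beta_bnd gamma_bnd bm_pos). }
  destruct sol as [HS [HI [S1 [S2 [I1 [I2 [HnS [[cI _] [ES _]]]]]]]]].
  destruct HnS as [cS [cS1 [dS0 [dS1 [S10 S11]]]]].
  destruct St_sol as [_ [T1 [T2 [[cT [cT1 [dT0 [dT1 [T10 T11]]]]] ET]]]].
  apply (neumann_subsol_le (fun x => St x - S x) (fun x => T1 x - S1 x)
           (fun x => T2 x - S2 x)); auto.
  - repeat split.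
    + apply cont01_minus; auto.
    + apply cont01_minus; auto.
    + intros; apply derivable_pt_lim_minus; auto.
    + intros; apply derivable_pt_lim_minus; auto.
    + rewrite T10, S10; ring.
    + rewrite T11, S11; ring.
  - apply Rmult_le_pos.
    + destruct (beta_bnd 0); [unfold in01; lra|lra].
    + eapply Rle_trans; [|apply Rmax_l]. destruct (Lam_bnd 0); [unfold in01; lra|lra].
  - intros x Hx. assert (Hx' : in01 x) by (unfold in01; lra).
    specialize (ES x Hx). specialize (ET x Hx). specialize (HI x Hx').
    specialize (HSup x Hx'). specialize (HS x Hx').
    destruct (beta_bnd x Hx'). destruct (gamma_bnd x Hx').
    assert (beta x * S x <= bM * Rmax LM (gM / bm)) by (apply Rmult_le_compat; lra).
    assert ((beta x * S x - gamma x) * I x <= bM * Rmax LM (gM / bm) * I x)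
      by (apply Rmult_le_compat_r; lra).
    lra.
Qed.

Lemma no_small_mass p q dl : 0 < p < q -> q < 1 -> 0 < dI -> 0 < dl ->
  (PI / (q - p)) ^ 2 * dI <= dl ->
  (forall x, p <= x <= q -> 2 * dl <= beta x * St x - gamma x - mu x) ->
  bM * ((2 + dS) * (bM * Rmax LM (gM / bm)) / dS * prim I 1) <= dl -> False.
Proof.
  intros Hpq Hq1 HdI Hdl Hom Hgap Hmass.
  assert (Hclose : forall x, in01 x -> beta x * (St x - S x) <= dl).
  { intros x Hx. specialize (Stilde_minus_S_le x Hx). destruct (beta_bnd x Hx).
    destruct (Rle_lt_dec 0 (St x - S x)).
    - assert (beta x * (St x - S x) <= bM * (St x - S x)) by (apply Rmult_le_compat_r; lra).
      nra.
    - assert (beta x * (St x - S x) <= 0) by (apply Rmult_le_0_l; lra). lra. }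
  destruct sol as [HS [HI [S1 [S2 [I1 [I2 [HnS [[cI [cI1 [dI0 [dI1 _]]]] [ES EI]]]]]]]]].
  apply (sturm_no_positive_solution (ext01 I) (ext01 I1) I2 p q dI dl); auto; try lra.
  - intros; apply continuity_pt_ext01; auto.
  - intros; apply continuity_pt_ext01; auto.
  - intros x Hx. rewrite (ext01_id I1) by (unfold in01; lra).
    apply derivable_pt_lim_ext01, dI0; lra.
  - intros x Hx. apply derivable_pt_lim_ext01, dI1; lra.
  - intros x Hx. rewrite ext01_id by (unfold in01; lra). apply HI. unfold in01; lra.
  - intros x Hx. assert (Hx' : in01 x) by (unfold in01; lra).
    rewrite ext01_id by exact Hx'.
    specialize (EI x ltac:(lra)). specialize (Hgap x ltac:(lra)).
    specialize (Hclose x Hx'). specialize (HI x Hx').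
    assert (Hrate : dl <= beta x * S x - gamma x - mu x) by nra.
    assert (dl * I x <= (beta x * S x - gamma x - mu x) * I x)
      by (apply Rmult_le_compat_r; lra).
    nra.
Qed.

End StildeComparison.

Definition infinitely_often (P : nat -> Prop) := forall N, exists n, (N <= n)%nat /\ P n.

Lemma pigeonhole_infinitely_often B P (b : nat -> nat) : infinitely_often P ->
  (forall n, P n -> (b n <= B)%nat) ->
  exists k, infinitely_often (fun n => P n /\ b n = k).
Proof.
  revert P. induction B as [|B IH]; intros P Hinf Hb.
  - exists 0%nat. intros N. destruct (Hinf N) as [n [Hn HP]]. exists n.
    specialize (Hb n HP). repeat split; auto. lia.
  - destruct (classic (infinitely_often (fun n => P n /\ b n = S B))) as [H|H].
    + exists (S B); auto.
    + apply not_all_ex_not in H. destruct H as [N0 HN0].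
      destruct (IH (fun n => P n /\ (N0 <= n)%nat)) as [k Hk].
      * intros N. destruct (Hinf (max N N0)) as [n [Hn HP]]. exists n.
        split; [lia|split; auto; lia].
      * intros n [HP Hn]. specialize (Hb n HP).
        assert (b n <> S B) by (intro E; apply HN0; exists n; auto). lia.
      * exists k. intros N. destruct (Hk N) as [n [Hn [[HP _] E]]]. exists n. auto.
Qed.

Lemma pigeonhole_list (bs : list (nat -> nat)) B P : infinitely_often P ->
  (forall b, List.In b bs -> forall n, P n -> (b n <= B)%nat) ->
  exists Q, infinitely_often Q /\ (forall n, Q n -> P n) /\
    (forall b, List.In b bs -> forall n m, Q n -> Q m -> b n = b m).
Proof.
  revert P. induction bs as [|b bs IH]; intros P Hinf Hb.
  - exists P. repeat split; auto. intros b [].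
  - destruct (pigeonhole_infinitely_often B P b Hinf) as [k Hk].
    { intros n Hn. apply Hb; auto. left; auto. }
    destruct (IH _ Hk) as [Q [HQ1 [HQ2 HQ3]]].
    { intros b' Hb' n [Hn _]. apply Hb; auto. right; auto. }
    exists Q. split; auto. split. { intros n Hn. apply HQ2; auto. }
    intros b' [<-|Hb'] n m Hn Hm.
    + destruct (HQ2 n Hn) as [_ E1]. destruct (HQ2 m Hm) as [_ E2]. congruence.
    + apply HQ3; auto.
Qed.

Definition cell (h y : R) : nat := Z.to_nat (up (y / h)).

Lemma up_nonneg r : 0 <= r -> (0 <= up r)%Z.
Proof.
  intros H. destruct (archimed r) as [A _]. assert (0 < IZR (up r)) by lra.
  apply lt_0_IZR in H0. lia.
Qed.

Lemma cell_eq_close h y y' : 0 < h -> 0 <= y -> 0 <= y' -> cell h y = cell h y' ->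
  Rabs (y - y') < h.
Proof.
  intros Hh Hy Hy' E. unfold cell in E.
  assert (Hr : 0 <= y / h) by (apply Rmult_le_pos; [lra| left; apply Rinv_0_lt_compat; lra]).
  assert (Hr' : 0 <= y' / h) by (apply Rmult_le_pos; [lra| left; apply Rinv_0_lt_compat; lra]).
  apply Z2Nat.inj in E; try (apply up_nonneg; auto).
  destruct (archimed (y / h)) as [A1 A2]. destruct (archimed (y' / h)) as [B1 B2].
  rewrite E in A1, A2.
  assert (Rabs (y / h - y' / h) < 1) by (unfold Rabs; destruct Rcase_abs; lra).
  replace (y - y') with (h * (y / h - y' / h)) by (field; lra).
  rewrite Rabs_mult, Rabs_pos_eq by lra. nra.
Qed.

Lemma cell_le h y A : 0 < h -> 0 <= y <= A -> (cell h y <= Z.to_nat (up (A / h)))%nat.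
Proof.
  intros Hh Hy. unfold cell.
  assert (Hr : 0 <= y / h) by (apply Rmult_le_pos; [lra| left; apply Rinv_0_lt_compat; lra]).
  assert (Hr2 : y / h <= A / h) by (apply Rmult_le_compat_r; [left; apply Rinv_0_lt_compat|]; lra).
  apply Z2Nat.inj_le; try (apply up_nonneg; lra).
  destruct (archimed (y / h)) as [A1 A2]. destruct (archimed (A / h)) as [B1 B2].
  assert (IZR (up (y / h)) < IZR (up (A / h)) + 1) by lra.
  rewrite <- plus_IZR in H. apply lt_IZR in H. lia.
Qed.

Lemma INR_succ_pos m : 0 < INR (S m).
Proof. apply lt_0_INR. lia. Qed.

Lemma grid_in01 m i : (i <= S m)%nat -> in01 (INR i / INR (S m)).
Proof.
  intros Hi. pose proof (INR_succ_pos m). apply le_INR in Hi. unfold in01. split.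
  - apply Rmult_le_pos. apply pos_INR. left; apply Rinv_0_lt_compat; lra.
  - apply (Rmult_le_reg_r (INR (S m))). lra. unfold Rdiv. rewrite Rmult_assoc, Rinv_l by lra. lra.
Qed.

Lemma grid_approx m x : in01 x ->
  exists i, (i <= S m)%nat /\ Rabs (x - INR i / INR (S m)) <= 1 / INR (S m).
Proof.
  intros Hx. unfold in01 in Hx. pose proof (INR_succ_pos m) as Hm.
  assert (Hr : 0 <= x * INR (S m)) by nra.
  set (k := up (x * INR (S m))).
  destruct (archimed (x * INR (S m))) as [A1 A2]. fold k in A1, A2.
  assert (Hk : (1 <= k)%Z).
  { assert (0 < IZR k) by lra. apply lt_0_IZR in H. lia. }
  exists (Z.to_nat (k - 1)).
  assert (HI : INR (Z.to_nat (k - 1)) = IZR k - 1).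
  { rewrite INR_IZR_INZ, Z2Nat.id by lia. rewrite minus_IZR. simpl. ring. }
  split.
  - apply INR_le. rewrite HI. assert (x * INR (S m) <= INR (S m)) by nra. lra.
  - rewrite HI.
    replace (x - (IZR k - 1) / INR (S m)) with ((x * INR (S m) - (IZR k - 1)) / INR (S m))
      by (field; lra).
    unfold Rdiv. rewrite Rabs_mult.
    rewrite (Rabs_pos_eq (/ _)) by (left; apply Rinv_0_lt_compat; lra).
    apply Rmult_le_compat_r. left; apply Rinv_0_lt_compat; lra.
    unfold Rabs; destruct Rcase_abs; lra.
Qed.

Lemma div_succ_small C eps : 0 < eps -> exists m, C / INR (S m) < eps.
Proof.
  intros He. destruct (Rle_lt_dec C 0) as [HC|HC].
  - exists 0%nat. pose proof (INR_succ_pos 0).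
    assert (C / INR 1 <= 0) by (apply Rmult_le_0_r; [lra|left; apply Rinv_0_lt_compat; lra]).
    lra.
  - set (m := Z.to_nat (up (C / eps))).
    assert (Hm : C / eps < INR (S m)).
    { destruct (archimed (C / eps)) as [A1 _].
      assert (0 < C / eps) by (apply Rdiv_lt_0_compat; lra).
      unfold m. rewrite S_INR, INR_IZR_INZ, Z2Nat.id by (apply up_nonneg; lra). lra. }
    exists m. pose proof (INR_succ_pos m).
    apply (Rmult_lt_reg_r (INR (S m))); [lra|].
    apply (Rmult_lt_reg_r (/ eps)); [apply Rinv_0_lt_compat; lra|].
    replace (C / INR (S m) * INR (S m) * / eps) with (C / eps) by (field; lra).
    replace (eps * INR (S m) * / eps) with (INR (S m)) by (field; lra). lra.
Qed.

(* Arzela-Ascoli for an equi-Lipschitz bounded sequence on [0,1], carried along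
   with a bounded real sequence: the values at the grid points [i / (m+1)] and
   [v n] take finitely many cells of width [1 / (m+1)], so an infinite set of
   indices can be refined to one on which all functions are [mesh m]-close;
   nesting these refinements over [m] gives a diagonal subsequence. *)
Section EquiLipschitzCompactness.
Variables (f : nat -> R -> R) (v : nat -> R) (A L : R).
Hypothesis L_ge0 : 0 <= L.
Hypothesis f_bnd : forall n x, in01 x -> 0 <= f n x <= A.
Hypothesis f_Lip : forall n x y, in01 x -> in01 y -> Rabs (f n x - f n y) <= L * Rabs (x - y).
Hypothesis v_bnd : forall n, 0 <= v n <= A.

Let mesh m := (2 * L + 1) / INR (S m).

Let close_on m (Q : nat -> Prop) := forall n n', Q n -> Q n' ->
  (forall x, in01 x -> Rabs (f n x - f n' x) <= mesh m) /\ Rabs (v n - v n') <= mesh m.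

Lemma refine_close m P : infinitely_often P ->
  exists Q, infinitely_often Q /\ (forall n, Q n -> P n) /\ close_on m Q.
Proof.
  intros Hinf. pose proof (INR_succ_pos m) as Hm.
  set (h := 1 / INR (S m)).
  assert (Hh : 0 < h) by (unfold h; apply Rdiv_lt_0_compat; lra).
  set (bs := map (fun i => fun n => cell h (f n (INR i / INR (S m)))) (seq 0 (S (S m)))
             ++ (fun n => cell h (v n)) :: nil).
  destruct (pigeonhole_list bs (Z.to_nat (up (A / h))) P Hinf) as [Q [HQ1 [HQ2 HQ3]]].
  { intros b Hb n _. unfold bs in Hb. apply in_app_iff in Hb. destruct Hb as [Hb|[<-|[]]].
    - apply in_map_iff in Hb. destruct Hb as [i [<- Hi]]. apply in_seq in Hi.
      apply cell_le; auto. apply f_bnd. apply grid_in01. lia.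
    - apply cell_le; auto. }
  exists Q. split; auto. split; auto. intros n n' Hn Hn'.
  assert (Heps : mesh m = 2 * L * h + h) by (unfold mesh, h; field; lra).
  split.
  - intros x Hx. destruct (grid_approx m x Hx) as [i [Hi Hxi]]. fold h in Hxi.
    set (xi := INR i / INR (S m)) in *.
    assert (Hxi' : in01 xi) by (apply grid_in01; auto).
    assert (Hc : Rabs (f n xi - f n' xi) < h).
    { apply cell_eq_close; auto. apply f_bnd; auto. apply f_bnd; auto.
      apply (HQ3 (fun n => cell h (f n xi))); auto. unfold bs. apply in_app_iff. left.
      apply in_map_iff. exists i. split; auto. apply in_seq. lia. }
    assert (H1 := f_Lip n x xi Hx Hxi'). assert (H2 := f_Lip n' xi x Hxi' Hx).
    rewrite (Rabs_minus_sym xi x) in H2.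
    assert (L * Rabs (x - xi) <= L * h) by (apply Rmult_le_compat_l; auto).
    rewrite Heps.
    replace (f n x - f n' x)
      with ((f n x - f n xi) + (f n xi - f n' xi) + (f n' xi - f n' x)) by ring.
    eapply Rle_trans; [apply Rabs_triang|].
    eapply Rle_trans; [apply Rplus_le_compat_r, Rabs_triang|].
    lra.
  - assert (Rabs (v n - v n') < h).
    { apply cell_eq_close; auto; try apply v_bnd.
      apply (HQ3 (fun n => cell h (v n))); auto. unfold bs. apply in_app_iff. right; left; auto. }
    rewrite Heps. assert (0 <= 2 * L * h) by (apply Rmult_le_pos; lra). lra.
Qed.

Let infinite_set := {Q : nat -> Prop | infinitely_often Q}.

Let refine_step m (P : infinite_set) :
  {Q : nat -> Prop | infinitely_often Q /\ (forall n, Q n -> proj1_sig P n) /\ close_on m Q} :=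
  constructive_indefinite_description _ (refine_close m (proj1_sig P) (proj2_sig P)).

Let all_indices : infinite_set :=
  exist _ (fun _ => True) (fun N => ex_intro _ N (conj (le_n N) I)).

Fixpoint nested (m : nat) : infinite_set :=
  let r := refine_step m (match m with O => all_indices | S m' => nested m' end) in
  exist _ (proj1_sig r) (proj1 (proj2_sig r)).

Lemma nested_close m : close_on m (proj1_sig (nested m)).
Proof. destruct m; exact (proj2 (proj2 (proj2_sig (refine_step _ _)))). Qed.

Lemma nested_decr m k n : (m <= k)%nat -> proj1_sig (nested k) n -> proj1_sig (nested m) n.
Proof.
  induction 1 as [|k Hmk IH]; auto. intros Hn. apply IH.
  exact (proj1 (proj2 (proj2_sig (refine_step (S k) (nested k)))) n Hn).
Qed.

Let pick (Q : infinite_set) N : {n | (N <= n)%nat /\ proj1_sig Q n} :=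
  constructive_indefinite_description _ (proj2_sig Q N).

Fixpoint diag (k : nat) : nat :=
  proj1_sig (pick (nested k) (match k with O => O | S k' => S (diag k') end)).

Lemma diag_in_nested k : proj1_sig (nested k) (diag k).
Proof. destruct k; exact (proj2 (proj2_sig (pick _ _))). Qed.

Lemma diag_incr k : (diag k < diag (S k))%nat.
Proof. exact (proj1 (proj2_sig (pick (nested (S k)) (S (diag k))))). Qed.

Lemma diag_close m k k' : (m <= k)%nat -> (m <= k')%nat ->
  (forall x, in01 x -> Rabs (f (diag k) x - f (diag k') x) <= mesh m) /\
  Rabs (v (diag k) - v (diag k')) <= mesh m.
Proof.
  intros H1 H2. apply (nested_close m);
    [apply (nested_decr m k) | apply (nested_decr m k')]; auto; apply diag_in_nested.
Qed.

Lemma diag_Cauchy_f x : Cauchy_crit (fun k => f (diag k) (clamp01 x)).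
Proof.
  intros eps He. destruct (div_succ_small (2 * L + 1) eps He) as [m Hm].
  exists m. intros n n' Hn Hn'. unfold Rdist.
  destruct (diag_close m n n' Hn Hn') as [H _]. specialize (H (clamp01 x) (clamp01_in01 x)).
  unfold mesh in H. lra.
Qed.

Lemma diag_Cauchy_v : Cauchy_crit (fun k => v (diag k)).
Proof.
  intros eps He. destruct (div_succ_small (2 * L + 1) eps He) as [m Hm].
  exists m. intros n n' Hn Hn'. unfold Rdist.
  destruct (diag_close m n n' Hn Hn') as [_ H]. unfold mesh in H. lra.
Qed.

Lemma equiLipschitz_subseq : exists (phi : nat -> nat) (g : R -> R) (l : R),
  (forall k, (phi k < phi (S k))%nat) /\
  (forall eps, 0 < eps -> exists N, forall k, (N <= k)%nat ->
     forall x, in01 x -> Rabs (f (phi k) x - g x) < eps) /\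
  Un_cv (fun k => v (phi k)) l.
Proof.
  set (g := fun x => proj1_sig (Rcomplete.R_complete _ (diag_Cauchy_f x))).
  assert (Hg : forall x, in01 x -> Un_cv (fun k => f (diag k) x) (g x)).
  { intros x Hx. unfold g. destruct (Rcomplete.R_complete _ (diag_Cauchy_f x)) as [l Hl].
    simpl. rewrite clamp01_id in Hl; auto. }
  destruct (Rcomplete.R_complete _ diag_Cauchy_v) as [l Hl].
  exists diag, g, l. split; [apply diag_incr|]. split; [|auto].
  intros eps He. destruct (div_succ_small (2 * L + 1) (eps / 2)) as [m Hm]; [lra|].
  exists m. intros k Hmk x Hx.
  enough (Rabs (f (diag k) x - g x) <= mesh m) by (unfold mesh in *; lra).
  apply le_epsilon. intros eta He'.
  destruct (Hg x Hx eta He') as [K HK].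
  set (k' := max K m). specialize (HK k' ltac:(unfold k'; lia)). unfold Rdist in HK.
  destruct (diag_close m k k' Hmk ltac:(unfold k'; lia)) as [H _]. specialize (H x Hx).
  replace (f (diag k) x - g x)
    with ((f (diag k) x - f (diag k') x) + (f (diag k') x - g x)) by ring.
  eapply Rle_trans. apply Rabs_triang. lra.
Qed.

End EquiLipschitzCompactness.

Lemma holder01_pos_bounds f : holder01 f -> pos01 f ->
  exists m M, 0 < m /\ forall x, in01 x -> m <= f x <= M.
Proof.
  intros Hh Hp. assert (Hc := holder01_cont01 f Hh).
  destruct (cont01_bounded f Hc) as [M HM].
  destruct (cont01_pos_lower_bound f Hc Hp) as [m [Hm Hm']].
  exists m, M. split; auto.
Qed.

Lemma uniform_limit_Lipschitz (f : nat -> R -> R) g L :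
  (forall n x y, in01 x -> in01 y -> Rabs (f n x - f n y) <= L * Rabs (x - y)) ->
  (forall eps, 0 < eps -> exists N, forall k, (N <= k)%nat ->
     forall x, in01 x -> Rabs (f k x - g x) < eps) ->
  forall x y, in01 x -> in01 y -> Rabs (g x - g y) <= L * Rabs (x - y).
Proof.
  intros Hf Hcv x y Hx Hy. apply le_epsilon. intros eps He.
  destruct (Hcv (eps / 2)) as [N HN]; [lra|].
  specialize (HN N (le_n N)). pose proof (HN x Hx). pose proof (HN y Hy).
  pose proof (Hf N x y Hx Hy).
  replace (g x - g y) with ((g x - f N x) + (f N x - f N y) + (f N y - g y)) by ring.
  eapply Rle_trans. apply Rabs_triang. eapply Rle_trans. apply Rplus_le_compat_r, Rabs_triang.
  rewrite (Rabs_minus_sym (g x)). lra.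
Qed.

Lemma Lipschitz_cont01 g L : 0 <= L ->
  (forall x y, in01 x -> in01 y -> Rabs (g x - g y) <= L * Rabs (x - y)) -> cont01 g.
Proof.
  intros HL Hg. apply cont01_of_eps. intros x Hx eps He.
  exists (eps / (L + 1)). split; [apply Rdiv_lt_0_compat; lra|].
  assert (He' : 0 < eps / (L + 1)) by (apply Rdiv_lt_0_compat; lra).
  intros y Hy Hyx. eapply Rle_lt_trans; [apply Hg; auto|].
  apply Rle_lt_trans with (L * (eps / (L + 1))); [apply Rmult_le_compat_l; lra|].
  replace (L * (eps / (L + 1))) with (eps - eps / (L + 1)) by (field; lra). lra.
Qed.

Lemma uniform_limit_ge (f : nat -> R -> R) g c :
  (forall n x, in01 x -> c <= f n x) ->
  (forall eps, 0 < eps -> exists N, forall k, (N <= k)%nat ->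
     forall x, in01 x -> Rabs (f k x - g x) < eps) ->
  forall x, in01 x -> c <= g x.
Proof.
  intros Hf Hcv x Hx. apply le_epsilon. intros eps He.
  destruct (Hcv eps He) as [N HN]. specialize (HN N (le_n N) x Hx).
  specialize (Hf N x Hx). unfold Rabs in HN; destruct Rcase_abs in HN; lra.
Qed.

Lemma strict_incr_ge_id (phi : nat -> nat) : (forall k, (phi k < phi (S k))%nat) ->
  forall k, (k <= phi k)%nat.
Proof. intros H k. induction k; [lia|]. specialize (H k). lia. Qed.

Lemma pos_on_subinterval G x0 : in01 x0 -> continuity_pt G x0 -> 0 < G x0 ->
  exists p q, 0 < p < q /\ q < 1 /\ forall x, p <= x <= q -> G x0 / 2 <= G x.
Proof.
  intros Hx0 Hc Hpos. unfold in01 in Hx0.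
  destruct (continuity_pt_eps G x0 Hc (G x0 / 2)) as [rho [Hrho Hnear]]; [lra|].
  set (r := Rmin rho (1/2)).
  assert (Hr : 0 < r) by (unfold r; apply Rmin_pos; lra).
  assert (Hr1 := Rmin_l rho (1/2)). assert (Hr2 := Rmin_r rho (1/2)). fold r in Hr1, Hr2.
  assert (Hball : forall x, Rabs (x - x0) < rho -> G x0 / 2 <= G x).
  { intros x Hx. specialize (Hnear x Hx). unfold Rabs in Hnear; destruct Rcase_abs in Hnear; lra. }
  destruct (Rle_lt_dec x0 (1/2)).
  - exists (x0 + r/4), (x0 + r/2). split; [lra|split; [lra|]]. intros x Hx.
    apply Hball. unfold Rabs; destruct Rcase_abs; lra.
  - exists (x0 - r/2), (x0 - r/4). split; [lra|split; [lra|]]. intros x Hx.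
    apply Hball. unfold Rabs; destruct Rcase_abs; lra.
Qed.

Section SingularLimit.
Variables (Lam beta gamma mu : R -> R) (dS : R) (St : R -> R).
Variables (Lm LM bm bM gm gM mm : R).
Variables (dI : nat -> R) (Sn In : nat -> R -> R).
Hypothesis dS_pos : 0 < dS.
Hypothesis St_sol : is_Stilde dS Lam St.
Hypothesis Lam_bnd : forall x, in01 x -> Lm <= Lam x <= LM.
Hypothesis beta_bnd : forall x, in01 x -> bm <= beta x <= bM.
Hypothesis gamma_bnd : forall x, in01 x -> gm <= gamma x <= gM.
Hypothesis mu_bnd : forall x, in01 x -> mm <= mu x.
Hypotheses (Lm_pos : 0 < Lm) (bm_pos : 0 < bm) (gm_pos : 0 < gm) (mm_pos : 0 < mm).
Hypothesis dI_pos : forall n, 0 < dI n.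
Hypothesis sols : forall n, pos_sol_E dS (dI n) Lam beta gamma mu (Sn n) (In n).

Lemma solutions_subseq_cv : exists (phi : nat -> nat) (S0 : R -> R) (l : R),
  (forall k, (phi k < phi (S k))%nat) /\ cont01 S0 /\ pos01 S0 /\
  (forall eps, 0 < eps -> exists N, forall k, (N <= k)%nat ->
     forall x, in01 x -> Rabs (Sn (phi k) x - S0 x) < eps) /\
  Un_cv (fun k => prim (In (phi k)) 1) l.
Proof.
  set (L := (LM + gM * (LM / mm)) / dS).
  assert (HLM : 0 < LM) by (destruct (Lam_bnd 0); [unfold in01; lra|lra]).
  assert (HgM : 0 < gM) by (destruct (gamma_bnd 0); [unfold in01; lra|lra]).
  assert (HL : 0 <= L).
  { apply Rmult_le_pos; [|left; apply Rinv_0_lt_compat; lra].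
    assert (0 <= gM * (LM / mm)) by (apply Rmult_le_pos; [lra|]; apply Rdiv_le_0_compat; lra).
    lra. }
  assert (Hc : 0 < Rmin Lm (gm / bM)).
  { apply Rmin_pos; [lra|]. apply Rdiv_lt_0_compat; [lra|].
    destruct (beta_bnd 0); [unfold in01; lra|lra]. }
  assert (Hlo : forall n x, in01 x -> Rmin Lm (gm / bM) <= Sn n x).
  { intros n. exact (S_ge Lam beta gamma mu dS (dI n) (Sn n) (In n) Lm LM bm bM gm gM
      dS_pos (sols n) Lam_bnd beta_bnd gamma_bnd bm_pos). }
  assert (Hlip : forall n x y, in01 x -> in01 y -> Rabs (Sn n x - Sn n y) <= L * Rabs (x - y)).
  { intros n. exact (S_Lipschitz Lam beta gamma mu dS (dI n) (Sn n) (In n) Lm LM bm bM gm gM mm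
      dS_pos (sols n) Lam_bnd beta_bnd gamma_bnd mu_bnd Lm_pos bm_pos gm_pos mm_pos). }
  destruct (equiLipschitz_subseq Sn (fun n => prim (In n) 1)
              (Rmax (Rmax LM (gM / bm)) (LM / mm)) L HL) as [phi [S0 [l [Hphi [Hunif Hcv]]]]].
  - intros n x Hx. split; [specialize (Hlo n x Hx); lra|].
    eapply Rle_trans; [|apply Rmax_l].
    exact (S_le Lam beta gamma mu dS (dI n) (Sn n) (In n) Lm LM bm bM gm gM
      dS_pos (sols n) Lam_bnd beta_bnd gamma_bnd bm_pos x Hx).
  - exact Hlip.
  - intros n. destruct (sols n) as [_ [HI [? [? [? [? [_ [[cI _] _]]]]]]]]. split.
    + apply (prim_bounds (In n) cI HI 1). unfold in01; lra.
    + eapply Rle_trans; [|apply Rmax_r].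
      exact (prim_I_le Lam beta gamma mu dS (dI n) (Sn n) (In n) Lm LM mm
        (sols n) Lam_bnd mu_bnd mm_pos).
  - exists phi, S0, l. repeat split; auto.
    + apply (Lipschitz_cont01 S0 L HL).
      apply (uniform_limit_Lipschitz (fun k => Sn (phi k))); auto.
    + intros x Hx. apply Rlt_le_trans with (Rmin Lm (gm / bM)); auto.
      apply (uniform_limit_ge (fun k => Sn (phi k))); auto.
Qed.

(* If the mass of [I] vanished along the subsequence, [S] would approach [St]
   (by [Stilde_minus_S_le]), making [I] strictly concave on a fixed interval
   where [beta St > gamma + mu], which is impossible once [dI] is small. *)
Lemma persistent_mass (phi : nat -> nat) l : (forall k, (phi k < phi (S k))%nat) ->
  cont01 beta -> cont01 gamma -> cont01 mu -> Un_cv dI 0 ->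
  (exists x, in01 x /\ beta x * St x > gamma x + mu x) ->
  Un_cv (fun k => prim (In (phi k)) 1) l -> 0 < l.
Proof.
  intros Hphi cb cg cm HdI [x0 [Hx0 Hgap0]] Hl. apply Rnot_le_lt. intro Hl0.
  destruct St_sol as [_ [T1 [T2 [[cSt _] _]]]].
  set (G := fun x => ext01 beta x * ext01 St x - ext01 gamma x - ext01 mu x).
  assert (HG0 : G x0 = beta x0 * St x0 - gamma x0 - mu x0)
    by (unfold G; rewrite !ext01_id by auto; ring).
  destruct (pos_on_subinterval G x0 Hx0) as [p [q [Hpq [Hq1 Hgap]]]]; try lra.
  { unfold G. continuity_pt_tac; apply continuity_pt_ext01; assumption. }
  set (dl := G x0 / 4).
  assert (Hdl : 0 < dl) by (unfold dl; lra).
  set (K := bM * ((2 + dS) * (bM * Rmax LM (gM / bm)) / dS)).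
  assert (HK : 0 <= K).
  { assert (0 < bM) by (destruct (beta_bnd 0); [unfold in01; lra|lra]).
    assert (0 < Rmax LM (gM / bm))
      by (eapply Rlt_le_trans; [|apply Rmax_l]; destruct (Lam_bnd 0); [unfold in01; lra|lra]).
    unfold K. apply Rmult_le_pos; [lra|]. apply Rdiv_le_0_compat; [|lra].
    apply Rmult_le_pos; [lra|]. apply Rmult_le_pos; lra. }
  set (om2 := (PI / (q - p)) ^ 2).
  assert (Hom2 : 0 <= om2) by (unfold om2; apply pow2_ge_0).
  destruct (HdI (dl / (om2 + 1))) as [N1 HN1]; [apply Rdiv_lt_0_compat; lra|].
  destruct (Hl (dl / (K + 1))) as [N2 HN2]; [apply Rdiv_lt_0_compat; lra|].
  set (k := max N1 N2).
  specialize (HN1 (phi k) ltac:(pose proof (strict_incr_ge_id phi Hphi k); unfold k in *; lia)).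
  specialize (HN2 k ltac:(unfold k; lia)).
  unfold R_dist in HN1, HN2. rewrite Rminus_0_r, Rabs_pos_eq in HN1 by (left; apply dI_pos).
  apply (no_small_mass Lam beta gamma mu dS (dI (phi k)) (Sn (phi k)) (In (phi k)) St
           Lm LM bm bM gm gM dS_pos (sols (phi k)) St_sol Lam_bnd beta_bnd gamma_bnd
           Lm_pos bm_pos gm_pos p q dl); auto.
  - fold om2. apply Rle_trans with ((om2 + 1) * dI (phi k)).
    + pose proof (dI_pos (phi k)). nra.
    + apply (Rmult_le_reg_r (/ (om2 + 1))); [apply Rinv_0_lt_compat; lra|].
      replace ((om2 + 1) * dI (phi k) * / (om2 + 1)) with (dI (phi k)) by (field; lra).
      unfold Rdiv in HN1. lra.
  - intros x Hx. specialize (Hgap x Hx).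
    rewrite HG0 in Hgap. unfold G in Hgap. rewrite !ext01_id in Hgap by (unfold in01; lra).
    unfold dl. lra.
  - fold K. rewrite <- Rmult_assoc. fold K.
    assert (Hv : prim (In (phi k)) 1 < dl / (K + 1))
      by (unfold Rabs in HN2; destruct Rcase_abs in HN2; lra).
    apply Rle_trans with (K * (dl / (K + 1))); [apply Rmult_le_compat_l; lra|].
    replace (K * (dl / (K + 1))) with (dl - dl / (K + 1)) by (field; lra).
    assert (0 < dl / (K + 1)) by (apply Rdiv_lt_0_compat; lra). lra.
Qed.

End SingularLimit.

Theorem theorem3p2
  (Lam beta gamma mu : R -> R) (dS : R)
  (HLam : holder01 Lam) (Hbeta : holder01 beta)
  (Hgamma : holder01 gamma) (Hmu : holder01 mu)
  (pLam : pos01 Lam) (pbeta : pos01 beta)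
  (pgamma : pos01 gamma) (pmu : pos01 mu)
  (HdS : 0 < dS)
  (St : R -> R) (HSt : is_Stilde dS Lam St)
  (Hne : exists x, in01 x /\ beta x * St x > gamma x + mu x)
  (dI : nat -> R) (HdIpos : forall n, 0 < dI n) (HdI : Un_cv dI 0)
  (Sn In : nat -> R -> R)
  (Hsol : forall n, pos_sol_E dS (dI n) Lam beta gamma mu (Sn n) (In n)) :
  exists (phi : nat -> nat) (S0 : R -> R) (I0 : R),
    (forall k, (phi k < phi (S k))%nat) /\
    cont01 S0 /\ pos01 S0 /\
    (forall eps, 0 < eps -> exists N, forall k, (N <= k)%nat ->
       forall x, in01 x -> Rabs (Sn (phi k) x - S0 x) < eps) /\
    0 < I0 /\
    exists pr : forall k, Riemann_integrable (In (phi k)) 0 1,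
      Un_cv (fun k => RiemannInt (pr k)) I0.
Proof.
  destruct (holder01_pos_bounds Lam HLam pLam) as [Lm [LM [HLm HL]]].
  destruct (holder01_pos_bounds beta Hbeta pbeta) as [bm [bM [Hbm Hb]]].
  destruct (holder01_pos_bounds gamma Hgamma pgamma) as [gm [gM [Hgm Hg]]].
  destruct (holder01_pos_bounds mu Hmu pmu) as [mm [mM [Hmm Hm]]].
  assert (Hm' : forall x, in01 x -> mm <= mu x) by (intros x Hx; apply Hm, Hx).
  destruct (solutions_subseq_cv Lam beta gamma mu dS Lm LM bm bM gm gM mm dI Sn In
              HdS HL Hb Hg Hm' HLm Hbm Hgm Hmm Hsol)
    as [phi [S0 [I0 [Hphi [HS0c [HS0p [Hunif HI0]]]]]]].
  assert (cIn : forall k, cont01 (In (phi k))).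
  { intros k. destruct (Hsol (phi k)) as [_ [_ [? [? [? [? [_ [[cI _] _]]]]]]]]. exact cI. }
  exists phi, S0, I0. repeat split; auto.
  - apply (persistent_mass Lam beta gamma mu dS St Lm LM bm bM gm gM dI Sn In
             HdS HSt HL Hb Hg HLm Hbm Hgm HdIpos Hsol phi); auto;
      apply holder01_cont01; assumption.
  - exists (fun k => Riemann_integrable_cont01 (In (phi k)) (cIn k)).
    intros eps He. destruct (HI0 eps He) as [N HN]. exists N. intros n Hn.
    rewrite RiemannInt_prim by auto. apply HN; auto.
Qed.
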